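(* Let $(x_t)_{t\in\Omega}$ be a continuous frame for a Hilbert space $H$ with analysis operator $\Theta:H\to L_2(\Omega)$, and let $x,y\in H$ be such that $x\neq\lambda y$ for every scalar $|\lambda|=1$. Then there exist $x_o,y_o\in \operatorname{span}\{x,y\}$ with $\|x_o\|=1$, $\|y_o\|\le 1$ and $\langle x_o,y_o\rangle=0$ such that $$\frac{\big\||\Theta x|-|\Theta y|\big\|}{\min_{|\lambda|=1}\|x-\lambda y\|}\ \ge\ \frac{\big\||\Theta x_o|-|\Theta y_o|\big\|}{\min_{|\lambda|=1}\|x_o-\lambda y_o\|}\ =\ \frac{\big\||\Theta x_o|-|\Theta y_o|\big\|}{(1+\|y_o\|^2)^{1/2}}.$$
   Context: $H$ is a real or complex Hilbert space; scalars $\lambda$ range over the field of $H$. A family $(x_t)_{t\in\Omega}\subseteq H$ indexed by a measure space $(\Omega,\mu)$ (with $t\mapsto\langle x,x_t\rangle$ measurable for each $x$) is a continuous frame if there are constants $B\ge A>0$ with $A\|x\|^2\le\int_\Omega|\langle x,x_t\rangle|^2\,d\mu(t)\le B\|x\|^2$ for all $x\in H$; $A$ is a lower frame bound. Its analysis operator is $\Theta:H\to L_2(\Omega)$, $\Theta(x)=(\langle x,x_t\rangle)_{t\in\Omega}$, and $|\Theta x|$ denotes the function $t\mapsto|\langle x,x_t\rangle|$. Norms of $|\Theta x|-|\Theta y|$ are taken in $L_2(\Omega)$. A (discrete) frame is the case of counting measure on a countable index set. *)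

From HB Require Import structures.
From mathcomp Require Import all_boot all_order all_algebra complex.
Import Order.TTheory GRing.Theory Num.Theory.
From mathcomp Require Import all_classical all_reals all_analysis.

Set Implicit Arguments.
Unset Strict Implicit.
Unset Printing Implicit Defensive.

Local Open Scope ring_scope.
Local Open Scope classical_set_scope.

(* The scalar field: [scal R false] = R (real Hilbert spaces),         *)
(*                   [scal R true]  = R[i] (complex Hilbert spaces).   *)
Definition scal (R : realType) (c : bool) : numFieldType :=
  if c then (R[i] : numFieldType) else (R : numFieldType).

Definition sconj (R : realType) (c : bool) : scal R c -> scal R c :=
  match c return scal R c -> scal R c with
  | true => fun z : R[i] => conjc z
  | false => fun z : R => z
  end.

Definition sRe (R : realType) (c : bool) : scal R c -> R :=
  match c return scal R c -> R with
  | true => fun z : R[i] => complex.Re z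
  | false => fun z : R => z
  end.

Definition sIm (R : realType) (c : bool) : scal R c -> R :=
  match c return scal R c -> R with
  | true => fun z : R[i] => complex.Im z
  | false => fun z : R => 0
  end.

Definition sabs (R : realType) (c : bool) : scal R c -> R :=
  match c return scal R c -> R with
  | true => fun z : R[i] => complex.Re `|z|
  | false => fun z : R => `|z|
  end.

Definition is_inner_product (R : realType) (c : bool) (H : lmodType (scal R c))
    (ip : H -> H -> scal R c) : Prop :=
  [/\ (forall (a : scal R c) (x y z : H), ip (a *: x + y) z = a * ip x z + ip y z),
      (forall x y : H, ip y x = sconj (ip x y)),
      (forall x : H, sIm (ip x x) = 0 /\ 0 <= sRe (ip x x)) &
      (forall x : H, ip x x = 0 -> x = 0)].

Definition hnorm (R : realType) (c : bool) (H : lmodType (scal R c))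
    (ip : H -> H -> scal R c) (x : H) : R :=
  Num.sqrt (sRe (ip x x)).

Definition hcomplete (R : realType) (c : bool) (H : lmodType (scal R c))
    (ip : H -> H -> scal R c) : Prop :=
  forall u : nat -> H,
    (forall e : R, 0 < e -> exists N : nat, forall m n : nat,
        (N <= m)%N -> (N <= n)%N -> hnorm ip (u m - u n) < e) ->
    exists l : H, forall e : R, 0 < e -> exists N : nat, forall n : nat,
        (N <= n)%N -> hnorm ip (u n - l) < e.

(* min_{|lambda|=1} ||x - lambda y||  (the minimum is attained; we use inf) *)
Definition phase_dist (R : realType) (c : bool) (H : lmodType (scal R c))
    (ip : H -> H -> scal R c) (x y : H) : R :=
  inf [set r : R | exists l : scal R c, sabs l = 1 /\ r = hnorm ip (x - l *: y)].

Definition weakly_measurable (R : realType) (c : bool) (H : lmodType (scal R c))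
    (ip : H -> H -> scal R c) (d : measure_display) (T : measurableType d)
    (xt : T -> H) : Prop :=
  forall x : H, measurable_fun setT (fun t => sRe (ip x (xt t))) /\
                measurable_fun setT (fun t => sIm (ip x (xt t))).

Definition is_continuous_frame (R : realType) (c : bool) (H : lmodType (scal R c))
    (ip : H -> H -> scal R c) (d : measure_display) (T : measurableType d)
    (mu : {measure set T -> \bar R}) (xt : T -> H) : Prop :=
  weakly_measurable ip xt /\
  exists A B : R, 0 < A /\ A <= B /\
    forall x : H,
      ((A * hnorm ip x ^+ 2)%:E <=
         \int[mu]_(t in setT) ((sabs (ip x (xt t))) ^+ 2)%:E)%E /\
      (\int[mu]_(t in setT) ((sabs (ip x (xt t))) ^+ 2)%:E <=
         (B * hnorm ip x ^+ 2)%:E)%E.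

(* || |Theta x| - |Theta y| ||_{L_2(mu)}, where (Theta x)(t) = <x, x_t>.
   For a frame this integral is finite, so [fine] is harmless. *)
Definition absTheta_dist (R : realType) (c : bool) (H : lmodType (scal R c))
    (ip : H -> H -> scal R c) (d : measure_display) (T : measurableType d)
    (mu : {measure set T -> \bar R}) (xt : T -> H) (x y : H) : R :=
  Num.sqrt (fine (\int[mu]_(t in setT)
     ((sabs (ip x (xt t)) - sabs (ip y (xt t))) ^+ 2)%:E)).

(** Rotate the phase of y so that w = l y makes <x, w> real and nonnegative;
   then |x - w| is the phase distance of x and y.  With s = |x - w| / |x + w|
   in [0, 1], put x' = ((1 + s) x + (s - 1) w) / 2 and y' = ((s - 1) x + (1 + s) w) / 2.
   Since x' - y' = x - w, x' + y' = s (x + w) and <x, w> is real, x' and y' are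
   orthogonal with |x'|^2 + |y'|^2 = |x - w|^2, which is therefore also the
   squared phase distance of x' and y'.  Pointwise the frame coefficients
   obey the same linear substitution, and it does not increase
   ||<x, x_t>| - |<w, x_t>||, so the numerator does not grow either.  The ratio
   is invariant under positive rescaling of the pair, so rescaling the longer
   of x', y' to norm 1 gives xo, yo. *)
From HB Require Import structures.
From mathcomp Require Import all_boot all_order all_algebra complex.
Import Order.TTheory GRing.Theory Num.Theory.
From mathcomp Require Import all_classical all_reals all_analysis.
From mathcomp Require Import measurable_realfun.
From mathcomp Require Import ring lra.
Set Implicit Arguments.
Unset Strict Implicit.
Unset Printing Implicit Defensive.
Local Open Scope ring_scope.

Section Scalars.
Variable R : realType.
Local Open Scope complex_scope.

Definition sreal (c : bool) : R -> scal R c :=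
  match c return R -> scal R c with
  | true => fun r => r%:C
  | false => fun r => r
  end.

Lemma scal_ext c (a b : scal R c) : sRe a = sRe b -> sIm a = sIm b -> a = b.
Proof. by case: c a b => [[a1 a2] [b1 b2]|a b] //= -> ->. Qed.

Lemma sReD c (a b : scal R c) : sRe (a + b) = sRe a + sRe b.
Proof. by case: c a b => [[a1 a2] [b1 b2]|a b]. Qed.
Lemma sImD c (a b : scal R c) : sIm (a + b) = sIm a + sIm b.
Proof. by case: c a b => [[a1 a2] [b1 b2]|a b] //=; rewrite addr0. Qed.
Lemma sReM c (a b : scal R c) : sRe (a * b) = sRe a * sRe b - sIm a * sIm b.
Proof. by case: c a b => [[a1 a2] [b1 b2]|a b] //=; rewrite mulr0 subr0. Qed.
Lemma sImM c (a b : scal R c) : sIm (a * b) = sRe a * sIm b + sIm a * sRe b.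
Proof. by case: c a b => [[a1 a2] [b1 b2]|a b] //=; rewrite mulr0 mul0r addr0. Qed.
Lemma sReN c (a : scal R c) : sRe (- a) = - sRe a.
Proof. by case: c a => [[a1 a2]|a]. Qed.
Lemma sImN c (a : scal R c) : sIm (- a) = - sIm a.
Proof. by case: c a => [[a1 a2]|a] //=; rewrite oppr0. Qed.
Lemma sRe_sconj c (a : scal R c) : sRe (sconj a) = sRe a.
Proof. by case: c a => [[a1 a2]|a]. Qed.
Lemma sIm_sconj c (a : scal R c) : sIm (sconj a) = - sIm a.
Proof. by case: c a => [[a1 a2]|a] //=; rewrite oppr0. Qed.
Lemma sRe_sreal c r : sRe (sreal c r) = r. Proof. by case: c. Qed.
Lemma sIm_sreal c r : sIm (sreal c r) = 0. Proof. by case: c. Qed.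
Lemma sRe0 c : sRe (0 : scal R c) = 0. Proof. by case: c. Qed.
Lemma sIm0 c : sIm (0 : scal R c) = 0. Proof. by case: c. Qed.
Lemma sRe1 c : sRe (1 : scal R c) = 1. Proof. by case: c. Qed.
Lemma sIm1 c : sIm (1 : scal R c) = 0. Proof. by case: c. Qed.

Definition sE := (sReD, sImD, sReM, sImM, sReN, sImN, sRe_sconj, sIm_sconj,
  sRe_sreal, sIm_sreal, sRe0, sIm0, sRe1, sIm1).

Lemma srealD c (r s : R) : sreal c (r + s) = sreal c r + sreal c s.
Proof. by apply: scal_ext; rewrite !sE ?addr0. Qed.
Lemma srealM c (r s : R) : sreal c (r * s) = sreal c r * sreal c s.
Proof. by apply: scal_ext; rewrite !sE; ring. Qed.
Lemma srealN c (r : R) : sreal c (- r) = - sreal c r.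
Proof. by apply: scal_ext; rewrite !sE ?oppr0. Qed.
Lemma sreal0 c : sreal c 0 = 0.
Proof. by apply: scal_ext; rewrite !sE. Qed.
Lemma sreal1 c : sreal c 1 = 1.
Proof. by apply: scal_ext; rewrite !sE. Qed.
Lemma sconj_sreal c r : sconj (sreal c r) = sreal c r.
Proof. by apply: scal_ext; rewrite !sE ?oppr0. Qed.
Lemma sconjM c (a b : scal R c) : sconj (a * b) = sconj a * sconj b.
Proof. by apply: scal_ext; rewrite !sE; ring. Qed.
Lemma sconjD c (a b : scal R c) : sconj (a + b) = sconj a + sconj b.
Proof. by apply: scal_ext; rewrite !sE; ring. Qed.
Lemma sconjN c (a : scal R c) : sconj (- a) = - sconj a.
Proof. by apply: scal_ext; rewrite !sE. Qed.
Lemma sconj0 c : sconj (0 : scal R c) = 0.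
Proof. by apply: scal_ext; rewrite !sE ?oppr0. Qed.
Lemma sconjK c (a : scal R c) : sconj (sconj a) = a.
Proof. by apply: scal_ext; rewrite !sE ?opprK. Qed.

Lemma sabsE c (z : scal R c) : sabs z = Num.sqrt (sRe z ^+ 2 + sIm z ^+ 2).
Proof. by case: c z => [[]|z] //=; rewrite expr0n addr0 sqrtr_sqr. Qed.
Lemma sabs_ge0 c (z : scal R c) : 0 <= sabs z.
Proof. by rewrite sabsE sqrtr_ge0. Qed.
Lemma sabs_sqr c (z : scal R c) : sabs z ^+ 2 = sRe z ^+ 2 + sIm z ^+ 2.
Proof. by rewrite sabsE sqr_sqrtr // addr_ge0 // sqr_ge0. Qed.
Lemma sabsD c (a b : scal R c) : sabs (a + b) <= sabs a + sabs b.
Proof.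
case: c a b => [a b|a b] /=; last exact: ler_normD.
exact: le_normcD.
Qed.
Lemma sabsM c (a b : scal R c) : sabs (a * b) = sabs a * sabs b.
Proof.
case: c a b => [a b|a b] /=; last exact: normrM.
exact: Normc.normcM.
Qed.
Lemma sabsN c (a : scal R c) : sabs (- a) = sabs a.
Proof. by rewrite !sabsE sReN sImN !sqrrN. Qed.
Lemma sabs_sconj c (a : scal R c) : sabs (sconj a) = sabs a.
Proof. by rewrite !sabsE sRe_sconj sIm_sconj sqrrN. Qed.
Lemma sabs_sreal c r : sabs (sreal c r) = `|r|.
Proof. by rewrite sabsE !sE expr0n addr0 sqrtr_sqr. Qed.
Lemma sabs0 c : sabs (0 : scal R c) = 0.
Proof. by rewrite -(sreal0 c) sabs_sreal normr0. Qed.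
Lemma sabs1 c : sabs (1 : scal R c) = 1.
Proof. by rewrite -(sreal1 c) sabs_sreal normr1. Qed.
Lemma sabs_eq0 c (z : scal R c) : sabs z = 0 -> z = 0.
Proof.
move=> z0; have := sabs_sqr z; rewrite z0 expr0n /= => hz.
by apply: scal_ext; rewrite !sE; nra.
Qed.
Lemma sRe_le_sabs c (a : scal R c) : sRe a <= sabs a.
Proof.
rewrite sabsE; apply: le_trans (ler_norm (sRe a)) _.
by rewrite -sqrtr_sqr ler_sqrt ?addr_ge0 ?sqr_ge0 // lerDl sqr_ge0.
Qed.
Lemma mulr_sconj c (a : scal R c) : a * sconj a = sreal c (sabs a ^+ 2).
Proof. by apply: scal_ext; rewrite sabs_sqr !sE; ring. Qed.

Lemma sabs_diff_sqr_le c (a b : scal R c) :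
  (sabs a - sabs b) ^+ 2 <= sabs (a - b) ^+ 2.
Proof.
have := sabsD (a - b) b; rewrite subrK => hab.
have := sabsD (b - a) a; rewrite subrK -opprB sabsN => hba.
have := sabs_ge0 (a - b); nra.
Qed.

Lemma phase_align c (z : scal R c) :
  exists l : scal R c, sabs l = 1 /\ sconj l * z = sreal c (sabs z).
Proof.
have [->|z0] := eqVneq z 0.
  by exists 1; rewrite sabs1 mulr0 sabs0 sreal0.
have zpos : 0 < sabs z.
  by rewrite lt_def sabs_ge0 andbT; apply: contra_neq z0 => /sabs_eq0.
exists (z * sreal c (sabs z)^-1); split.
  by rewrite sabsM sabs_sreal ger0_norm ?invr_ge0 ?sabs_ge0 // mulfV // gt_eqF.
rewrite sconjM sconj_sreal mulrC mulrA mulr_sconj -srealM; congr sreal.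
by rewrite expr2 -mulrA mulfV ?mulr1 // gt_eqF.
Qed.

Definition srot c (s : R) (a b : scal R c) : scal R c :=
  sreal c ((1 + s) / 2) * a + sreal c ((s - 1) / 2) * b.

(* |srot a b|^2 - |srot b a|^2 = s (|a|^2 - |b|^2), while s a and s b are
   convex combinations of srot a b and srot b a, so that
   s (|a| + |b|) <= |srot a b| + |srot b a|. *)
Lemma sabs_srot_gap_le c (s : R) (a b : scal R c) : 0 <= s <= 1 ->
  (sabs (srot s a b) - sabs (srot s b a)) ^+ 2 <= (sabs a - sabs b) ^+ 2.
Proof.
case/andP=> s0 s1.
set A := sabs (srot s a b); set B := sabs (srot s b a).
have A0 : 0 <= A := sabs_ge0 _.
have B0 : 0 <= B := sabs_ge0 _.
have [a0 b0] := (sabs_ge0 a, sabs_ge0 b).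
have gapE : A ^+ 2 - B ^+ 2 = s * (sabs a ^+ 2 - sabs b ^+ 2).
  by rewrite /A /B /srot !sabs_sqr !sE; field.
have convex_comb (u v : scal R c) :
    sabs (sreal c s * u) <= (1 + s) / 2 * sabs (srot s u v) + (1 - s) / 2 * sabs (srot s v u).
  have -> : sreal c s * u = sreal c ((1 + s) / 2) * srot s u v +
                            sreal c ((1 - s) / 2) * srot s v u.
    by apply: scal_ext; rewrite /srot !sE; field.
  by apply: le_trans (sabsD _ _) _; rewrite !sabsM !sabs_sreal !ger0_norm //; lra.
have sum_le : s * (sabs a + sabs b) <= A + B.
  have := convex_comb a b; have := convex_comb b a.
  rewrite !sabsM sabs_sreal ger0_norm // -/A -/B; lra.
have [AB0|ABpos] := eqVneq (A + B) 0.
  have [-> ->] : A = 0 /\ B = 0 by split; lra.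
  by rewrite subrr expr0n sqr_ge0.
have ABsqr_pos : 0 < (A + B) ^+ 2 by rewrite exprn_gt0 // lt_def ABpos addr_ge0.
rewrite -(ler_pM2r ABsqr_pos) -exprMn.
have -> : (A - B) * (A + B) = A ^+ 2 - B ^+ 2 by ring.
rewrite gapE.
have -> : (s * (sabs a ^+ 2 - sabs b ^+ 2)) ^+ 2 =
          (sabs a - sabs b) ^+ 2 * (s * (sabs a + sabs b)) ^+ 2 by ring.
apply: ler_wpM2l; first exact: sqr_ge0.
by rewrite ler_pXn2r ?nnegrE ?mulr_ge0 ?addr_ge0.
Qed.
End Scalars.

Lemma inf_eq_min (R : realType) (S : set R) m : S m -> (forall r, S r -> m <= r) -> inf S = m.
Proof.
move=> Sm lbm; apply/le_anti/andP; split; first by apply: ge_inf => //; exists m.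
by apply: lb_le_inf => //; exists m.
Qed.

Section InnerProduct.
Variables (R : realType) (c : bool) (H : lmodType (scal R c)).
Variable ip : H -> H -> scal R c.
Hypothesis ip_inner : is_inner_product ip.

Lemma ip_sconj (x y : H) : ip y x = sconj (ip x y).
Proof. by case: ip_inner. Qed.

Lemma ip0l z : ip 0 z = 0.
Proof.
case: ip_inner => /(_ 1 0 0 z); rewrite scaler0 addr0 mul1r => h _ _ _.
by apply: (addrI (ip 0 z)); rewrite addr0 -h.
Qed.
Lemma ipDl x y z : ip (x + y) z = ip x z + ip y z.
Proof. by case: ip_inner => /(_ 1 x y z); rewrite scale1r mul1r. Qed.
Lemma ipZl a x z : ip (a *: x) z = a * ip x z.
Proof. by case: ip_inner => /(_ a x 0 z); rewrite !addr0 ip0l addr0. Qed.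
Lemma ipNl x z : ip (- x) z = - ip x z.
Proof. by rewrite -scaleN1r ipZl mulN1r. Qed.
Lemma ipBl x y z : ip (x - y) z = ip x z - ip y z.
Proof. by rewrite ipDl ipNl. Qed.
Lemma ipZr a x z : ip z (a *: x) = sconj a * ip z x.
Proof. by rewrite ip_sconj ipZl sconjM -ip_sconj. Qed.
Lemma ipDr x y z : ip z (x + y) = ip z x + ip z y.
Proof. by rewrite ip_sconj ipDl sconjD -!ip_sconj. Qed.
Lemma ipNr x z : ip z (- x) = - ip z x.
Proof. by rewrite ip_sconj ipNl sconjN -ip_sconj. Qed.
Lemma ipBr x y z : ip z (x - y) = ip z x - ip z y.
Proof. by rewrite ipDr ipNr. Qed.

Lemma hnorm_ge0 x : 0 <= hnorm ip x.
Proof. exact: sqrtr_ge0. Qed.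
Lemma hnorm_sqr x : hnorm ip x ^+ 2 = sRe (ip x x).
Proof. by rewrite /hnorm sqr_sqrtr //; case: ip_inner => _ _ /(_ x) []. Qed.
Lemma ipxx x : ip x x = sreal c (hnorm ip x ^+ 2).
Proof.
by apply: scal_ext; rewrite !sE ?hnorm_sqr //; case: ip_inner => _ _ /(_ x) [].
Qed.
Lemma hnorm_eq0 x : hnorm ip x = 0 -> x = 0.
Proof.
by move=> x0; case: ip_inner => _ _ _; apply; rewrite ipxx x0 expr0n sreal0.
Qed.
Lemma hnorm_gt0 x : x != 0 -> 0 < hnorm ip x.
Proof. by move=> x0; rewrite lt_def hnorm_ge0 andbT; apply: contra_neq x0 => /hnorm_eq0. Qed.
Lemma hnormZ a x : hnorm ip (a *: x) = sabs a * hnorm ip x.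
Proof.
rewrite {1}/hnorm ipZl ipZr ipxx mulrA mulr_sconj -srealM sRe_sreal.
by rewrite -exprMn sqrtr_sqr ger0_norm // mulr_ge0 ?sabs_ge0 ?hnorm_ge0.
Qed.
Lemma hnormN x : hnorm ip (- x) = hnorm ip x.
Proof. by rewrite -scaleN1r hnormZ sabsN sabs1 mul1r. Qed.

Lemma hnorm_subZ_sqr u v l : hnorm ip (u - l *: v) ^+ 2 =
  hnorm ip u ^+ 2 + sabs l ^+ 2 * hnorm ip v ^+ 2 - 2 * sRe (sconj l * ip u v).
Proof.
rewrite hnorm_sqr ipBl !ipBr !ipZl !ipZr mulrA mulr_sconj !ipxx (ip_sconj u v).
have -> : l * sconj (ip u v) = sconj (sconj l * ip u v) by rewrite sconjM sconjK.
by rewrite -srealM !sE; ring.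
Qed.

Lemma ip_sreal_comb u v r : ip u v = sreal c r -> forall a b a' b',
  ip (sreal c a *: u + sreal c b *: v) (sreal c a' *: u + sreal c b' *: v) =
  sreal c (a * a' * hnorm ip u ^+ 2 + (a * b' + b * a') * r + b * b' * hnorm ip v ^+ 2).
Proof.
move=> uv a b a' b'; have vu : ip v u = sreal c r by rewrite ip_sconj uv sconj_sreal.
rewrite !ipDl !ipDr !ipZl !ipZr !sconj_sreal !ipxx uv vu -!srealM -!srealD.
by congr sreal; ring.
Qed.

Lemma hnormD_sqr u v r : ip u v = sreal c r ->
  hnorm ip (u + v) ^+ 2 = hnorm ip u ^+ 2 + hnorm ip v ^+ 2 + 2 * r.
Proof.
move=> uv; rewrite hnorm_sqr.
have -> : u + v = sreal c 1 *: u + sreal c 1 *: v by rewrite sreal1 !scale1r.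
by rewrite (ip_sreal_comb uv) sRe_sreal; ring.
Qed.

Lemma hnormB_sqr u v r : ip u v = sreal c r ->
  hnorm ip (u - v) ^+ 2 = hnorm ip u ^+ 2 + hnorm ip v ^+ 2 - 2 * r.
Proof.
move=> uv; have uNv : ip u (- v) = sreal c (- r) by rewrite ipNr uv srealN.
by rewrite (hnormD_sqr uNv) hnormN mulrN.
Qed.

Lemma phase_distE x y l : sabs l = 1 -> sconj l * ip x y = sreal c (sabs (ip x y)) ->
  phase_dist ip x y = hnorm ip (x - l *: y).
Proof.
move=> l1 lxy; apply: inf_eq_min; first by exists l.
move=> _ [l' [l'1 ->]]; rewrite -ler_sqr ?nnegrE ?hnorm_ge0 //.
rewrite !hnorm_subZ_sqr l1 l'1 lxy sRe_sreal expr1n !mul1r.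
suff : sRe (sconj l' * ip x y) <= sabs (ip x y) by lra.
by apply: le_trans (sRe_le_sabs _) _; rewrite sabsM sabs_sconj l'1 mul1r.
Qed.

Lemma phase_dist_orth u v : ip u v = 0 ->
  phase_dist ip u v = Num.sqrt (hnorm ip u ^+ 2 + hnorm ip v ^+ 2).
Proof.
move=> uv; rewrite (@phase_distE _ _ 1) ?sabs1 //; last by rewrite uv mulr0 sabs0 sreal0.
rewrite -[LHS]ger0_norm ?hnorm_ge0 // -sqrtr_sqr hnorm_subZ_sqr uv mulr0 sRe0.
by rewrite mulr0 subr0 sabs1 expr1n mul1r.
Qed.
End InnerProduct.

Definition in_span2 (R : realType) (c : bool) (H : lmodType (scal R c)) (x y z : H) :=
  exists a b : scal R c, z = a *: x + b *: y.

Lemma in_span2Z (R : realType) (c : bool) (H : lmodType (scal R c)) (x y z : H) k :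
  in_span2 x y z -> in_span2 x y (k *: z).
Proof. by case=> a [b ->]; exists (k * a), (k * b); rewrite scalerDr !scalerA. Qed.

Section FrameCoefficients.
Variables (R : realType) (c : bool) (H : lmodType (scal R c)).
Variable ip : H -> H -> scal R c.
Hypothesis ip_inner : is_inner_product ip.
Variables (d : measure_display) (T : measurableType d).
Variables (mu : {measure set T -> \bar R}) (xt : T -> H).
Hypothesis frame : is_continuous_frame ip mu xt.

Local Notation gap x y := (fun t => ((sabs (ip x (xt t)) - sabs (ip y (xt t))) ^+ 2)%:E).

Lemma measurable_sabs_coef x : measurable_fun setT (fun t => sabs (ip x (xt t))).
Proof.
have -> : (fun t => sabs (ip x (xt t))) =
    Num.sqrt \o (fun t => sRe (ip x (xt t)) ^+ 2 + sIm (ip x (xt t)) ^+ 2).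
  by apply: funext => t; rewrite /= sabsE.
apply: measurableT_comp; first exact: continuous_measurable_fun (@sqrt_continuous R).
by case: frame => /(_ x) [mRe mIm] _; apply: measurable_funD; apply: measurable_funX.
Qed.

Lemma measurable_gap x y : measurable_fun setT (gap x y).
Proof.
by apply/measurable_EFinP; apply/measurable_funX/measurable_funB; apply: measurable_sabs_coef.
Qed.

(* The upper frame bound applied to x - y dominates the gap, by the reverse triangle inequality. *)
Lemma integral_gap_fin_num x y : (\int[mu]_(t in setT) gap x y t)%E \is a fin_num.
Proof.
rewrite ge0_fin_numE; last by apply: integral_ge0 => t _; rewrite lee_fin sqr_ge0.
case: frame => _ [A [B [_ [_ bounds]]]].
apply: (@le_lt_trans _ _ (B * hnorm ip (x - y) ^+ 2)%:E); last exact: ltry.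
apply: le_trans (proj2 (bounds (x - y))); apply: ge0_le_integral => //.
- by move=> t _; rewrite lee_fin sqr_ge0.
- exact: measurable_gap.
- by apply/measurable_EFinP/measurable_funX; exact: measurable_sabs_coef.
- by move=> t _; rewrite lee_fin (ipBl ip_inner) sabs_diff_sqr_le.
Qed.

Lemma absTheta_dist_le x y x' y' :
  (forall t, (sabs (ip x' (xt t)) - sabs (ip y' (xt t))) ^+ 2 <=
             (sabs (ip x (xt t)) - sabs (ip y (xt t))) ^+ 2) ->
  absTheta_dist ip mu xt x' y' <= absTheta_dist ip mu xt x y.
Proof.
move=> gap_le; rewrite /absTheta_dist ler_sqrt; last first.
  by apply: fine_ge0; apply: integral_ge0 => t _; rewrite lee_fin sqr_ge0.
apply: fine_le; [exact: integral_gap_fin_num|exact: integral_gap_fin_num|].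
apply: ge0_le_integral => //; last by move=> t _; rewrite lee_fin.
- by move=> t _; rewrite lee_fin sqr_ge0.
- exact: measurable_gap.
- exact: measurable_gap.
Qed.

Lemma absTheta_distC x y : absTheta_dist ip mu xt y x = absTheta_dist ip mu xt x y.
Proof.
rewrite /absTheta_dist; congr (Num.sqrt (fine _)).
by apply: eq_integral => t _; rewrite -sqrrN opprB.
Qed.

Lemma absTheta_distZ k x y : 0 <= k ->
  absTheta_dist ip mu xt (sreal c k *: x) (sreal c k *: y) = k * absTheta_dist ip mu xt x y.
Proof.
move=> k0; rewrite /absTheta_dist.
rewrite (eq_integral (fun t => ((k ^+ 2)%:E * gap x y t)%E)); last first.
  move=> t _; rewrite !(ipZl ip_inner) !sabsM sabs_sreal ger0_norm // -EFinM.
  by congr EFin; ring.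
rewrite ge0_integralZl_EFin ?sqr_ge0 //; last exact: measurable_gap.
  by rewrite fineM ?integral_gap_fin_num // sqrtrM ?sqr_ge0 // sqrtr_sqr ger0_norm.
by move=> t _; rewrite lee_fin sqr_ge0.
Qed.
End FrameCoefficients.

Section Rotation.
Variables (R : realType) (c : bool) (H : lmodType (scal R c)).
Variable ip : H -> H -> scal R c.
Hypothesis ip_inner : is_inner_product ip.

Definition rotate (s : R) (u v : H) : H :=
  sreal c ((1 + s) / 2) *: u + sreal c ((s - 1) / 2) *: v.

Lemma ip_rotatel s u v z : ip (rotate s u v) z = srot s (ip u z) (ip v z).
Proof. by rewrite /rotate (ipDl ip_inner) !(ipZl ip_inner). Qed.

Lemma rotate_in_span2 s x y l : in_span2 x y (rotate s x (l *: y)).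
Proof. by exists (sreal c ((1 + s) / 2)), (sreal c ((s - 1) / 2) * l); rewrite /rotate scalerA. Qed.

Lemma rotate_in_span2_swap s x y l : in_span2 x y (rotate s (l *: y) x).
Proof.
exists (sreal c ((s - 1) / 2)), (sreal c ((1 + s) / 2) * l).
by rewrite /rotate scalerA addrC.
Qed.

Lemma rotate_swap s u v :
  rotate s v u = sreal c ((s - 1) / 2) *: u + sreal c ((1 + s) / 2) *: v.
Proof. by rewrite /rotate addrC. Qed.

Section RealInnerProduct.
Variables (u v : H) (r : R).
Hypothesis uv : ip u v = sreal c r.

Lemma ip_rotate s : ip (rotate s u v) (rotate s v u) =
  sreal c ((s ^+ 2 * hnorm ip (u + v) ^+ 2 - hnorm ip (u - v) ^+ 2) / 4).
Proof.
rewrite (rotate_swap s u v) /rotate (ip_sreal_comb ip_inner uv).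
by rewrite (hnormD_sqr ip_inner uv) (hnormB_sqr ip_inner uv); congr sreal; field.
Qed.

Lemma hnorm_rotate_sqr s : hnorm ip (rotate s u v) ^+ 2 + hnorm ip (rotate s v u) ^+ 2 =
  (s ^+ 2 * hnorm ip (u + v) ^+ 2 + hnorm ip (u - v) ^+ 2) / 2.
Proof.
rewrite ![hnorm ip (rotate _ _ _) ^+ 2](hnorm_sqr ip_inner) (rotate_swap s u v) /rotate.
rewrite !(ip_sreal_comb ip_inner uv) !sRe_sreal.
by rewrite (hnormD_sqr ip_inner uv) (hnormB_sqr ip_inner uv); field.
Qed.
End RealInnerProduct.
End Rotation.

Section Reduction.
Variables (R : realType) (c : bool) (H : lmodType (scal R c)).
Variable ip : H -> H -> scal R c.
Hypothesis ip_inner : is_inner_product ip.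
Variables (d : measure_display) (T : measurableType d).
Variables (mu : {measure set T -> \bar R}) (xt : T -> H).
Hypothesis frame : is_continuous_frame ip mu xt.

Lemma orthogonal_reduction x y : (forall l : scal R c, sabs l = 1 -> x <> l *: y) ->
  exists x' y', [/\ in_span2 x y x', in_span2 x y y', ip x' y' = 0,
    0 < hnorm ip x' ^+ 2 + hnorm ip y' ^+ 2 &
    absTheta_dist ip mu xt x' y' / Num.sqrt (hnorm ip x' ^+ 2 + hnorm ip y' ^+ 2)
      <= absTheta_dist ip mu xt x y / phase_dist ip x y].
Proof.
move=> not_phase; have [l [l1 lxy]] := phase_align (ip x y).
set w := l *: y; have xw : ip x w = sreal c (sabs (ip x y)) by rewrite (ipZr ip_inner).
have dist_gt0 : 0 < hnorm ip (x - w).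
  by apply: (hnorm_gt0 ip_inner); rewrite subr_eq0; apply/eqP/not_phase.
have dist_le : hnorm ip (x - w) <= hnorm ip (x + w).
  rewrite -ler_sqr ?nnegrE ?hnorm_ge0 // (hnormD_sqr ip_inner xw) (hnormB_sqr ip_inner xw).
  by have := sabs_ge0 (ip x y); lra.
have sum_gt0 := lt_le_trans dist_gt0 dist_le.
set s := hnorm ip (x - w) / hnorm ip (x + w).
have s01 : 0 <= s <= 1 by rewrite divr_ge0 ?hnorm_ge0 // ler_pdivrMr // mul1r.
have s_sqr : s ^+ 2 * hnorm ip (x + w) ^+ 2 = hnorm ip (x - w) ^+ 2.
  by rewrite -exprMn divfK // gt_eqF.
have norm_sum : hnorm ip (rotate s x w) ^+ 2 + hnorm ip (rotate s w x) ^+ 2 =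
                hnorm ip (x - w) ^+ 2.
  by rewrite (hnorm_rotate_sqr ip_inner xw) s_sqr; field.
exists (rotate s x w), (rotate s w x); split.
- exact: rotate_in_span2.
- exact: rotate_in_span2_swap.
- by rewrite (ip_rotate ip_inner xw) s_sqr subrr mul0r sreal0.
- by rewrite norm_sum exprn_gt0.
rewrite norm_sum sqrtr_sqr ger0_norm ?hnorm_ge0 // (phase_distE ip_inner l1 lxy) -/w.
apply: ler_wpM2r; first by rewrite invr_ge0 hnorm_ge0.
apply: (absTheta_dist_le ip_inner frame) => t; rewrite !(ip_rotatel ip_inner).
have := sabs_srot_gap_le (ip x (xt t)) (ip w (xt t)) s01.
by rewrite /w (ipZl ip_inner) sabsM l1 mul1r.
Qed.

Lemma normalize_orthogonal_pair x y x' y' (K : R) :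
  in_span2 x y x' -> in_span2 x y y' -> ip x' y' = 0 ->
  0 < hnorm ip x' ^+ 2 + hnorm ip y' ^+ 2 ->
  absTheta_dist ip mu xt x' y' / Num.sqrt (hnorm ip x' ^+ 2 + hnorm ip y' ^+ 2) <= K ->
  exists xo yo : H,
    in_span2 x y xo /\ in_span2 x y yo /\
    hnorm ip xo = 1 /\ hnorm ip yo <= 1 /\ ip xo yo = 0 /\
    absTheta_dist ip mu xt xo yo / phase_dist ip xo yo <= K /\
    absTheta_dist ip mu xt xo yo / phase_dist ip xo yo
      = absTheta_dist ip mu xt xo yo / Num.sqrt (1 + hnorm ip yo ^+ 2).
Proof.
wlog le_y'x' : x' y' / hnorm ip y' <= hnorm ip x'.
  move=> wlog_le sx sy orth sum_gt0 bound.
  have [le|/ltW le_x'y'] := leP (hnorm ip y') (hnorm ip x'); first exact: (wlog_le x' y').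
  apply: (wlog_le y' x') => //; first by rewrite (ip_sconj ip_inner) orth sconj0.
    by rewrite addrC.
  by rewrite absTheta_distC addrC.
move=> sx sy orth sum_gt0 bound.
have x'_gt0 : 0 < hnorm ip x' by have := hnorm_ge0 ip y'; nra.
set k := (hnorm ip x')^-1; have k_gt0 : 0 < k by rewrite invr_gt0.
have kx' : k * hnorm ip x' = 1 by rewrite mulVf // gt_eqF.
have norm_kx' : hnorm ip (sreal c k *: x') = 1.
  by rewrite (hnormZ ip_inner) sabs_sreal gtr0_norm.
have norm_ky' : hnorm ip (sreal c k *: y') = k * hnorm ip y'.
  by rewrite (hnormZ ip_inner) sabs_sreal gtr0_norm.
have orth_k : ip (sreal c k *: x') (sreal c k *: y') = 0.
  by rewrite (ipZl ip_inner) (ipZr ip_inner) orth !mulr0.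
have dist_k : phase_dist ip (sreal c k *: x') (sreal c k *: y') =
              Num.sqrt (1 + hnorm ip (sreal c k *: y') ^+ 2).
  by rewrite (phase_dist_orth ip_inner orth_k) norm_kx' expr1n.
exists (sreal c k *: x'), (sreal c k *: y'); do ![split] => //.
- exact: in_span2Z.
- exact: in_span2Z.
- by rewrite norm_ky' -kx' ler_pM2l.
- rewrite dist_k (absTheta_distZ ip_inner frame) ?(ltW k_gt0) // norm_ky'.
  rewrite -[1](expr1n _ 2) -kx' !exprMn -mulrDr sqrtrM ?sqr_ge0 // sqrtr_sqr.
  by rewrite gtr0_norm // -mulf_div divff ?gt_eqF // mul1r.
- by rewrite dist_k.
Qed.
End Reduction.

Theorem theorem2p1 (R : realType) (c : bool) (H : lmodType (scal R c))
    (ip : H -> H -> scal R c)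
    (Hip : is_inner_product ip) (Hcompl : hcomplete ip)
    (d : measure_display) (T : measurableType d)
    (mu : {measure set T -> \bar R}) (xt : T -> H)
    (Hframe : is_continuous_frame ip mu xt)
    (x y : H)
    (Hxy : forall l : scal R c, sabs l = 1 -> x <> l *: y) :
  exists xo yo : H,
    (exists a b : scal R c, xo = a *: x + b *: y) /\
    (exists a b : scal R c, yo = a *: x + b *: y) /\
    hnorm ip xo = 1 /\ hnorm ip yo <= 1 /\ ip xo yo = 0 /\
    absTheta_dist ip mu xt xo yo / phase_dist ip xo yo
      <= absTheta_dist ip mu xt x y / phase_dist ip x y /\
    absTheta_dist ip mu xt xo yo / phase_dist ip xo yo
      = absTheta_dist ip mu xt xo yo / Num.sqrt (1 + hnorm ip yo ^+ 2).
Proof.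
have [x' [y' [sx' sy' orth sum_gt0 ratio_le]]] := orthogonal_reduction Hip Hframe Hxy.
exact: (normalize_orthogonal_pair Hip Hframe sx' sy' orth sum_gt0 ratio_le).
Qed.
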